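(* In the standing setup, fix $\varepsilon>0$ and let $\Sigma$ be the set of subsequences $\alpha=(\alpha_n)$ of $(p_n)$ such that $\ell_n^\alpha<\frac1{12}\frac{\varepsilon}{4^n}$ for all $n$. Define $\xi:\Sigma\to\mathbb R$ by $\xi(\alpha)=\lim_{n\to\infty}\alpha_0\alpha_1\cdots\alpha_n(\infty)$ (this limit exists and is a positive real number). Then the image $\xi(\Sigma)$ is uncountable.
   Context: Standing setup: $\mathbb H$ is the upper half-plane, $\partial\mathbb H=\mathbb R\cup\{\infty\}$; for $v\in T^1\mathbb H$, $v(t)$ is the unit-speed geodesic with initial vector $v$, $v(+\infty)$ its forward endpoint. For a horocycle $\tilde H$ and a parabolic isometry $p$ preserving it, $\ell(\tilde H,p)$ is the horocyclic arc length between $x$ and $px$ ($x\in\tilde H$); positive orientation is that of an arc-length parametrization with $p\tilde H(s)=\tilde H(s+\ell(\tilde H,p))$; $\tilde u$ is tangent to the oriented pair $(\tilde H,p)$ if $\tilde u(\mathbb R^+)$ is tangent to $\tilde H$ at $\tilde u(t_0)=\tilde H(s_0)$, $t_0\ge0$, with $\frac{d\tilde u}{dt}(t_0)=\frac{d\tilde H}{ds}(s_0)$ for a positively oriented parametrization. $\Gamma$ is a torsion-free Fuchsian group, $S=\Gamma\backslash\mathbb H$ has at least one cusp, $u\in T^1S$ is cusp-recurrent with lift $\tilde u$ normalized so that $\tilde u(0)=i$, $\tilde u(+\infty)=\infty$. $(\tilde H_n,p_n)_{n\in\mathbb N}$: $p_n\in\Gamma$ parabolic with fixed point $x_n\in\mathbb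 R$, $\tilde H_n$ horocycle centered at $x_n$, $\tilde u$ tangent to the oriented pair $(\tilde H_n,p_n)$ at $\tilde u(t_n)$, $(t_n)$ nonnegative increasing to $+\infty$, $x_n$ positive distinct increasing to $+\infty$, horoballs bounded by the $\tilde H_n$ pairwise disjoint, $\ell(\tilde H_n,p_n)\to0$. A subsequence $\alpha$ is $\alpha_n=p_{k_n}$ ($k_n$ strictly increasing), $\ell_n^\alpha=\ell(\tilde H_{k_n},p_{k_n})$. *)

From Stdlib Require Import Reals.
From Coquelicot Require Import Coquelicot.
Open Scope R_scope.

Record Mat := mkMat { ma : R; mb : R; mc : R; md : R }.

Definition mat_mul (M N : Mat) : Mat :=
  mkMat (ma M * ma N + mb M * mc N) (ma M * mb N + mb M * md N)
        (mc M * ma N + md M * mc N) (mc M * mb N + md M * md N).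
Definition mat_id : Mat := mkMat 1 0 0 1.
Definition mat_opp (M : Mat) : Mat := mkMat (- ma M) (- mb M) (- mc M) (- md M).
Definition mat_inv (M : Mat) : Mat := mkMat (md M) (- mb M) (- mc M) (ma M).
Fixpoint mat_pow (M : Mat) (k : nat) : Mat :=
  match k with O => mat_id | S k' => mat_mul M (mat_pow M k') end.
Definition det (M : Mat) : R := ma M * md M - mb M * mc M.

(* g is trivial in PSL(2,R) *)
Definition is_pm_id (g : Mat) : Prop := g = mat_id \/ g = mat_opp mat_id.

(* Gamma : a set of SL(2,R) matrices, closed under -I, forming a group:
   it is the preimage of a subgroup of PSL(2,R). *)
Definition SL2_group (G : Mat -> Prop) : Prop :=
  (forall g, G g -> det g = 1) /\ G mat_id /\
  (forall g h, G g -> G h -> G (mat_mul g h)) /\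
  (forall g, G g -> G (mat_inv g)) /\
  (forall g, G g -> G (mat_opp g)).

(* discreteness: the identity of PSL(2,R) is isolated in the image of G *)
Definition discrete_group (G : Mat -> Prop) : Prop :=
  exists e, 0 < e /\ forall g, G g -> ~ is_pm_id g ->
    ~ (Rabs (ma g - 1) < e /\ Rabs (mb g) < e /\ Rabs (mc g) < e /\ Rabs (md g - 1) < e).

Definition Fuchsian (G : Mat -> Prop) : Prop := SL2_group G /\ discrete_group G.

Definition torsion_free (G : Mat -> Prop) : Prop :=
  forall g k, G g -> (1 <= k)%nat -> is_pm_id (mat_pow g k) -> is_pm_id g.

Definition parabolic (g : Mat) : Prop :=
  det g = 1 /\ Rabs (ma g + md g) = 2 /\ ~ is_pm_id g.

Definition fixes_real (g : Mat) (x : R) : Prop :=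
  mc g * x + md g <> 0 /\ (ma g * x + mb g) / (mc g * x + md g) = x.

Definition mobius (g : Mat) (z : C) : C :=
  Cdiv (Cplus (Cmult (RtoC (ma g)) z) (RtoC (mb g)))
       (Cplus (Cmult (RtoC (mc g)) z) (RtoC (md g))).

(* the lift u~ : u~(t) = i e^t, unit speed vertical geodesic, u~(0)=i, u~(+oo)=oo *)
Definition ugeod (t : R) : C := (0, exp t).
Definition ugeod_vel (t : R) : C := (0, exp t).

(* The horocycle centered at x in R of Euclidean diameter D > 0 is the circle
   |z - (x + i D/2)| = D/2 minus the point x. The map
      s |-> x - D/(s+i)
   is a unit-hyperbolic-speed (arc-length) parametrization of it; every arc
   length parametrization is of the form s |-> hpar x D (sigma*s + c),
   sigma = 1 or -1. *)
Definition hpar (x D : R) (s : R) : C :=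
  Cminus (RtoC x) (Cdiv (RtoC D) (Cplus (RtoC s) Ci)).

Definition oriented_param (x D sigma : R) (s : R) : C := hpar x D (sigma * s).

(* sigma gives the positive orientation of the oriented pair (H(x,D), p), and
   l > 0 is the horocyclic length l(H,p): p H(s) = H(s + l). *)
Definition pos_orient (x D : R) (p : Mat) (sigma l : R) : Prop :=
  (sigma = 1 \/ sigma = -1) /\ 0 < l /\
  forall s, mobius p (oriented_param x D sigma s) = oriented_param x D sigma (s + l).

Definition horo_length (x D : R) (p : Mat) (l : R) : Prop :=
  exists sigma, pos_orient x D p sigma l.

Definition tangent_at (x D : R) (p : Mat) (t : R) : Prop :=
  0 <= t /\
  exists sigma l s0, pos_orient x D p sigma l /\
    oriented_param x D sigma s0 = ugeod t /\
    is_derive (oriented_param x D sigma) s0 (ugeod_vel t).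

Definition horoball (x D : R) (z : C) : Prop :=
  0 < Im z /\ (Re z - x) ^ 2 + (Im z - D / 2) ^ 2 < (D / 2) ^ 2.

Definition strictly_incr (k : nat -> nat) : Prop := forall n, (k n < k (S n))%nat.

(* alpha_0 alpha_1 ... alpha_n, with alpha_j = p (k j) *)
Fixpoint sub_prod (p : nat -> Mat) (k : nat -> nat) (n : nat) : Mat :=
  match n with
  | O => p (k O)
  | S n' => mat_mul (sub_prod p k n') (p (k (S n')))
  end.

(* M(oo) = a/c when c <> 0 (and oo when c = 0).  The sequence of boundary points
   M_n(oo) converges to the real number L iff eventually c_n <> 0 and a_n/c_n -> L. *)
Definition orbit_inf_conv (M : nat -> Mat) (L : R) : Prop :=
  (exists N, forall n, (N <= n)%nat -> mc (M n) <> 0) /\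
  is_lim_seq (fun n => ma (M n) / mc (M n)) L.

Definition countable_set (A : R -> Prop) : Prop :=
  exists f : nat -> R, forall y, A y -> exists n, f n = y.

From Stdlib Require Import Reals Lra Lia Psatz Wf_nat ClassicalEpsilon.
From Coquelicot Require Import Coquelicot.
Open Scope R_scope.

(* A parabolic [p] fixing [x] is, up to sign, [[1 + tau x, -tau x^2], [tau, 1 - tau x]];
   it acts on real [z > x] by [z |-> x + (z - x) / (1 + tau (z - x))] and sends [oo] to
   [x + 1/tau].  Tangency of the upward geodesic to the positively oriented horocycle
   forces [tau > 0], so each [p_n] maps [(x_n, oo]] increasingly into [(x_n, x_n + 1/tau_n]].
   As the fixed points increase, [alpha_0 ... alpha_n (oo)] decreases inside nested
   intervals and converges to a limit above [x_(k 0) > 0].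
   For uncountability, build a binary tree of admissible indices: at level [n] two
   indices [lo n < hi n] with [p_lo(oo) < x_hi], and level [n + 1] chosen so far out that
   [p_hi] maps it above [p_lo(oo)].  Then the limit along a branch taking [lo] at level [n]
   is strictly below that of any branch agreeing before [n] and taking [hi], so bit
   sequences inject into the set of limits and Cantor's diagonal argument applies.
   The bounds [ell_n < eps / (12 4^n)] enter only through their positivity: together with
   [ell -> 0] and [x -> oo] they leave infinitely many admissible indices at every level. *)

Definition act (M : Mat) (z : R) : R := (ma M * z + mb M) / (mc M * z + md M).

Lemma act_mul M N z :
  mc N * z + md N <> 0 -> mc M * act N z + md M <> 0 ->
  mc (mat_mul M N) * z + md (mat_mul M N) <> 0 /\
  act (mat_mul M N) z = act M (act N z).
Proof.
  unfold act, mat_mul; cbn [ma mb mc md]; intros HN HM.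
  assert (Hden : (mc M * ma N + md M * mc N) * z + (mc M * mb N + md M * md N)
                 = (mc M * ((ma N * z + mb N) / (mc N * z + md N)) + md M)
                   * (mc N * z + md N)) by (field; exact HN).
  rewrite Hden; split; [now apply Rmult_integral_contrapositive|].
  field; split; [exact HN|].
  intro H0; apply HM; rewrite <- (Rmult_0_l (/ (mc N * z + md N))), <- H0; field; exact HN.
Qed.

Lemma ratio_mul M N :
  mc N <> 0 -> mc M * (ma N / mc N) + md M <> 0 ->
  mc (mat_mul M N) <> 0 /\
  ma (mat_mul M N) / mc (mat_mul M N) = act M (ma N / mc N).
Proof.
  unfold act, mat_mul; cbn [ma mb mc md]; intros HN HM.
  assert (Hden : mc M * ma N + md M * mc N = (mc M * (ma N / mc N) + md M) * mc N)
    by (field; exact HN).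
  rewrite Hden; split; [now apply Rmult_integral_contrapositive|].
  field; split; [exact HN|].
  intro H0; apply HM; rewrite <- (Rmult_0_l (/ mc N)), <- H0; field; exact HN.
Qed.

Definition parab (x tau : R) : Mat :=
  mkMat (1 + tau * x) (- (tau * x ^ 2)) tau (1 - tau * x).

Definition parab_pm (p : Mat) (x tau : R) : Prop :=
  p = parab x tau \/ p = mat_opp (parab x tau).

Definition parab_map (x tau z : R) : R := x + (z - x) / (1 + tau * (z - x)).

Lemma parabolic_parab_pm p x : parabolic p -> fixes_real p x -> exists tau, parab_pm p x tau.
Proof.
  destruct p as [a b c d].
  unfold parabolic, fixes_real, det, parab_pm, parab, mat_opp; cbn [ma mb mc md].
  intros [Hdet [Htr _]] [Hden Hfix].
  assert (Hb : b = x * (c * x + d) - a * x).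
  { enough (a * x + b = x * (c * x + d)) by lra.
    rewrite <- Hfix at 2; field; exact Hden. }
  subst b.
  destruct (Rcase_abs (a + d)) as [Hneg | Hnonneg].
  - rewrite Rabs_left in Htr by lra.
    assert (Hd : d = -2 - a) by lra; subst d.
    assert (Ha : (a + 1 - c * x) ^ 2 = 0) by nra.
    exists (- c); right; f_equal; nra.
  - rewrite Rabs_right in Htr by lra.
    assert (Hd : d = 2 - a) by lra; subst d.
    assert (Ha : (a - 1 - c * x) ^ 2 = 0) by nra.
    exists c; left; f_equal; nra.
Qed.

Lemma act_parab_pm p x tau z : parab_pm p x tau -> 0 < tau -> x < z ->
  mc p * z + md p <> 0 /\ act p z = parab_map x tau z.
Proof.
  intros Hp Htau Hz; assert (0 < tau * (z - x)) by nra.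
  unfold act, parab_map; destruct Hp as [-> | ->]; unfold parab, mat_opp; cbn [ma mb mc md];
    (split; [nra | field; nra]).
Qed.

Lemma parab_pm_ratio p x tau : parab_pm p x tau -> 0 < tau ->
  mc p <> 0 /\ ma p / mc p = x + / tau.
Proof.
  intros Hp Htau.
  destruct Hp as [-> | ->]; unfold parab, mat_opp; cbn [ma mb mc md];
    (split; [lra | field; lra]).
Qed.

Lemma parab_map_eq x tau z : 0 < tau -> x < z ->
  parab_map x tau z = x + / tau - / (tau * (1 + tau * (z - x))).
Proof. intros Htau Hz; unfold parab_map; field; nra. Qed.

Lemma parab_map_gt x tau z : 0 < tau -> x < z -> x < parab_map x tau z.
Proof.
  intros Htau Hz; unfold parab_map.
  enough (0 < (z - x) / (1 + tau * (z - x))) by lra.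
  apply Rdiv_lt_0_compat; nra.
Qed.

Lemma parab_map_lt_top x tau z : 0 < tau -> x < z -> parab_map x tau z < x + / tau.
Proof.
  intros Htau Hz; rewrite parab_map_eq by assumption.
  enough (0 < / (tau * (1 + tau * (z - x)))) by lra.
  apply Rinv_0_lt_compat; nra.
Qed.

Lemma parab_map_lt x tau z1 z2 : 0 < tau -> x < z1 -> z1 < z2 ->
  parab_map x tau z1 < parab_map x tau z2.
Proof.
  intros Htau H1 H12; rewrite !parab_map_eq by lra.
  enough (/ (tau * (1 + tau * (z2 - x))) < / (tau * (1 + tau * (z1 - x)))) by lra.
  assert (0 < tau * (z1 - x)) by nra.
  assert (tau * (z1 - x) < tau * (z2 - x)) by nra.
  apply Rinv_lt_contravar; [apply Rmult_lt_0_compat; apply Rmult_lt_0_compat | ]; try lra.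
  apply Rmult_lt_compat_l; lra.
Qed.

Definition parab_threshold (x tau y : R) : R := x + / ((x + / tau - y) * tau ^ 2).

Lemma parab_map_above_threshold x tau y z :
  0 < tau -> y < x + / tau -> parab_threshold x tau y <= z -> y < parab_map x tau z.
Proof.
  unfold parab_threshold; intros Htau Hy Hz.
  set (del := x + / tau - y) in *.
  assert (Hdel : 0 < del * tau ^ 2) by (apply Rmult_lt_0_compat; [unfold del; lra | nra]).
  assert (Hzx : / (del * tau ^ 2) <= z - x) by lra.
  assert (Hinv : 0 < / (del * tau ^ 2)) by now apply Rinv_0_lt_compat.
  rewrite parab_map_eq by lra.
  enough (/ (tau * (1 + tau * (z - x))) < del) by (unfold del in *; lra).
  assert (H1 : 1 <= del * tau ^ 2 * (z - x)).
  { rewrite <- (Rinv_r (del * tau ^ 2)) by lra. now apply Rmult_le_compat_l; [lra|]. }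
  apply (Rmult_lt_reg_r (tau * (1 + tau * (z - x)))); [nra|].
  rewrite Rinv_l by nra. nra.
Qed.

Lemma hpar_eq x D v : hpar x D v = (x - D * v / (v ^ 2 + 1), D / (v ^ 2 + 1)).
Proof.
  unfold hpar, Cminus, Cdiv, Cplus, Cmult, Cinv, Copp, RtoC, Ci; cbn.
  f_equal; field; nra.
Qed.

Lemma is_derive_snd (f : R -> C) s l :
  is_derive f s l -> is_derive (fun y => snd (f y)) s (snd l).
Proof.
  intro Hf; unfold is_derive in *.
  eapply filterdiff_ext_lin; [|intro y; reflexivity].
  apply (filterdiff_comp f snd _ snd Hf), filterdiff_linear, is_linear_snd.
Qed.

(* With [sigma = 1] the height [D / (s^2 + 1)] would decrease at the tangency point, which
   lies at [s0 > 0] because its real part [x - D s0 / (s0^2 + 1)] vanishes; but the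
   geodesic [ugeod] moves upwards. *)
Lemma tangent_orientation x D t sigma s0 : 0 < x -> 0 < D ->
  (sigma = 1 \/ sigma = -1) ->
  oriented_param x D sigma s0 = ugeod t ->
  is_derive (oriented_param x D sigma) s0 (ugeod_vel t) -> sigma = -1.
Proof.
  intros Hx HD [-> | ->] Hpt Hd; [exfalso | reflexivity].
  unfold oriented_param in *; rewrite hpar_eq in Hpt; injection Hpt as Hre _.
  replace (1 * s0 * (1 * s0 * 1)) with (s0 ^ 2) in Hre by ring; rewrite Rmult_1_l in Hre.
  assert (Hs0 : 0 < s0).
  { assert (Hq : D * s0 / (s0 ^ 2 + 1) = x) by lra.
    assert (D * s0 = x * (s0 ^ 2 + 1)) by (rewrite <- Hq; field; nra).
    nra. }
  apply is_derive_snd in Hd.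
  assert (Him : is_derive (fun s => snd (hpar x D (1 * s))) s0
                  (- (2 * D * s0) / (s0 ^ 2 + 1) ^ 2)).
  { eapply is_derive_ext; [intro s; rewrite hpar_eq; reflexivity|].
    cbn; auto_derive; [nra | field; nra]. }
  pose proof (is_derive_unique _ _ _ Hd) as E1; rewrite (is_derive_unique _ _ _ Him) in E1.
  change (snd (ugeod_vel t)) with (exp t) in E1; pose proof (exp_pos t).
  assert (0 < 2 * D * s0 / (s0 ^ 2 + 1) ^ 2) by (apply Rdiv_lt_0_compat; nra).
  unfold Rdiv in *; lra.
Qed.

Lemma mobius_fst a b c d X Y : (c * X + d) ^ 2 + (c * Y) ^ 2 <> 0 ->
  fst (mobius (mkMat a b c d) (X, Y)) =
  ((a * X + b) * (c * X + d) + a * c * Y ^ 2) / ((c * X + d) ^ 2 + (c * Y) ^ 2).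
Proof.
  intro H; unfold mobius, Cdiv, Cplus, Cmult, Cinv, RtoC; cbn.
  field; contradict H; nra.
Qed.

Lemma mobius_parab_pm_fst p x tau D : parab_pm p x tau ->
  fst (mobius p (x, D)) = x + tau * D ^ 2 / (1 + (tau * D) ^ 2).
Proof.
  intro Hp; assert (Hden : 1 + (tau * D) ^ 2 <> 0) by nra.
  assert (E1 : (tau * x + (1 - tau * x)) ^ 2 + (tau * D) ^ 2 = 1 + (tau * D) ^ 2) by ring.
  assert (E2 : (- tau * x + - (1 - tau * x)) ^ 2 + (- tau * D) ^ 2 = 1 + (tau * D) ^ 2)
    by ring.
  destruct Hp as [-> | ->]; unfold parab, mat_opp; rewrite mobius_fst; cbn [ma mb mc md];
    rewrite ?E1, ?E2; try exact Hden; field; exact Hden.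
Qed.

(* [p] moves the highest point [x + iD] of the horocycle to [hpar x D (-l)], whose real
   part [x + D l / (l^2 + 1)] exceeds [x]. *)
Lemma pos_orient_neg_tau_pos x D p tau l : 0 < D -> parab_pm p x tau ->
  pos_orient x D p (-1) l -> 0 < tau.
Proof.
  intros HD Hp [_ [Hl Hmove]].
  specialize (Hmove 0); unfold oriented_param in Hmove; rewrite !hpar_eq in Hmove.
  replace (x - D * (-1 * 0) / ((-1 * 0) ^ 2 + 1), D / ((-1 * 0) ^ 2 + 1)) with (x, D)
    in Hmove by (f_equal; field).
  apply (f_equal fst) in Hmove; rewrite (mobius_parab_pm_fst _ _ _ _ Hp) in Hmove.
  cbn [fst] in Hmove.
  assert (Hshift : 0 < D * l / ((-1 * (0 + l)) ^ 2 + 1)) by (apply Rdiv_lt_0_compat; nra).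
  assert (Hden : 0 < 1 + (tau * D) ^ 2) by nra.
  assert (0 < tau * D ^ 2 / (1 + (tau * D) ^ 2)).
  { replace (-1 * (0 + l)) with (- l) in * by ring. unfold Rdiv in *. nra. }
  assert (0 < tau * D ^ 2).
  { replace (tau * D ^ 2) with (tau * D ^ 2 / (1 + (tau * D) ^ 2) * (1 + (tau * D) ^ 2))
      by (field; lra).
    now apply Rmult_lt_0_compat. }
  nra.
Qed.

Lemma tangent_parab_pm x D p t : 0 < x -> 0 < D -> parabolic p -> fixes_real p x ->
  tangent_at x D p t -> exists tau, 0 < tau /\ parab_pm p x tau.
Proof.
  intros Hx HD Hpar Hfix [_ [sigma [l [s0 [Horient [Hpt Hd]]]]]].
  destruct (parabolic_parab_pm p x Hpar Hfix) as [tau Hp].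
  assert (sigma = -1) as ->
    by (apply (tangent_orientation x D t sigma s0); try apply Horient; auto).
  exists tau; split; [exact (pos_orient_neg_tau_pos x D p tau l HD Hp Horient) | exact Hp].
Qed.

Lemma incr_seq_lt (u : nat -> R) : (forall n, u n < u (S n)) ->
  forall i j, (i < j)%nat -> u i < u j.
Proof.
  intros Hu i j Hij; induction Hij as [|j Hij IH]; [apply Hu|].
  specialize (Hu j); lra.
Qed.

Lemma incr_seq_le (u : nat -> R) : (forall n, u n < u (S n)) ->
  forall i j, (i <= j)%nat -> u i <= u j.
Proof.
  intros Hu i j Hij; destruct (Nat.eq_dec i j) as [->|Hne]; [lra|].
  left; apply incr_seq_lt; [exact Hu | lia].
Qed.

Lemma strictly_incr_lt (k : nat -> nat) : strictly_incr k ->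
  forall i j, (i < j)%nat -> (k i < k j)%nat.
Proof.
  intros Hk i j Hij; induction Hij as [|j Hij IH]; [apply Hk|].
  specialize (Hk j); lia.
Qed.

Section Composition.

Variables (c r : nat -> R).

Fixpoint parab_comp (n : nat) (z : R) : R :=
  match n with
  | O => z
  | S m => parab_comp m (parab_map (c m) (r m) z)
  end.

(* With [f_j := parab_map (c j) (r j)], [parab_orbit n] is [f_0 (... (f_n oo))]: [f_n] extends
   to [oo] by [c n + / r n]. *)
Definition parab_orbit (n : nat) : R := parab_comp n (c n + / r n).

Hypothesis r_pos : forall n, 0 < r n.
Hypothesis c_incr : forall n, c n < c (S n).

(* For [n = 0] the bound [c (pred 0)] is spurious: [parab_comp 0] is the identity. *)
Lemma parab_comp_lt n z1 z2 : c (pred n) < z1 -> z1 < z2 ->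
  parab_comp n z1 < parab_comp n z2.
Proof.
  revert z1 z2; induction n as [|m IH]; intros z1 z2 H1 H12; [exact H12|].
  cbn [parab_comp pred] in *; apply IH.
  - pose proof (incr_seq_le c c_incr (pred m) m ltac:(lia)).
    pose proof (parab_map_gt (c m) (r m) z1 (r_pos m) H1); lra.
  - now apply parab_map_lt.
Qed.

Lemma parab_comp_tail n m w : (n <= m)%nat -> c m < w ->
  exists w', c n < w' /\ parab_comp m w = parab_comp n w'.
Proof.
  intros Hnm; revert w; induction Hnm as [|m Hnm IH]; intros w Hw; [now exists w|].
  apply IH, parab_map_gt; [apply r_pos|].
  specialize (c_incr m); lra.
Qed.

Lemma parab_orbit_bracket n m : (n < m)%nat ->
  parab_comp n (parab_map (c n) (r n) (c (S n))) < parab_orbit m < parab_orbit n.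
Proof.
  intros Hnm; unfold parab_orbit.
  assert (Htop : c m < c m + / r m) by (pose proof (Rinv_0_lt_compat _ (r_pos m)); lra).
  destruct (parab_comp_tail (S n) m _ Hnm Htop) as [w [Hw ->]]; cbn [parab_comp].
  pose proof (incr_seq_le c c_incr (pred n) n ltac:(lia)) as Hpred.
  pose proof (c_incr n) as Hcn.
  pose proof (parab_map_gt (c n) (r n) (c (S n)) (r_pos n) Hcn).
  pose proof (parab_map_gt (c n) (r n) w (r_pos n) ltac:(lra)).
  split; apply parab_comp_lt; try lra.
  - apply parab_map_lt; [apply r_pos | lra | exact Hw].
  - apply parab_map_lt_top; [apply r_pos | lra].
Qed.

Lemma parab_orbit_lim_bounds (L : R) n : is_lim_seq parab_orbit L ->
  parab_comp n (parab_map (c n) (r n) (c (S n))) <= L <= parab_orbit n.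
Proof.
  intros HL; set (low := parab_comp n _); split.
  - change (Rbar_le low L).
    apply (is_lim_seq_le_loc (fun _ => low) parab_orbit); [|apply is_lim_seq_const | exact HL].
    exists (S n); intros m Hm; left; apply (parab_orbit_bracket n m Hm).
  - change (Rbar_le L (parab_orbit n)).
    apply (is_lim_seq_le_loc parab_orbit (fun _ => parab_orbit n));
      [|exact HL | apply is_lim_seq_const].
    exists (S n); intros m Hm; left; apply (parab_orbit_bracket n m Hm).
Qed.

Lemma parab_orbit_cvg : exists L, c 0 < L /\ is_lim_seq parab_orbit L.
Proof.
  set (B := parab_map (c 0) (r 0) (c 1)).
  assert (HB : c 0 < B) by (apply parab_map_gt; [apply r_pos | apply c_incr]).
  assert (Hlb : forall m, B <= parab_orbit m).
  { intros [|m]; left; [|apply (parab_orbit_bracket 0 (S m) ltac:(lia))].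
    apply parab_map_lt_top; [apply r_pos | apply c_incr]. }
  assert (Hdecr : Un_decreasing parab_orbit).
  { intro n; left; apply (parab_orbit_bracket n (S n) ltac:(lia)). }
  assert (Hbdd : has_lb parab_orbit).
  { exists (- B); intros z [m ->]; unfold opp_seq; specialize (Hlb m); lra. }
  destruct (decreasing_cv _ Hdecr Hbdd) as [L HL]; apply is_lim_seq_Reals in HL.
  exists L; split; [|exact HL].
  pose proof (parab_orbit_lim_bounds L 0 HL) as Hb; cbn [parab_comp] in Hb; fold B in Hb; lra.
Qed.

End Composition.

Lemma parab_comp_ext c r c' r' n z :
  (forall i, (i < n)%nat -> c i = c' i /\ r i = r' i) ->
  parab_comp c r n z = parab_comp c' r' n z.
Proof.
  revert z; induction n as [|n IH]; intros z Hcr; [reflexivity|]; cbn [parab_comp].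
  destruct (Hcr n ltac:(lia)) as [-> ->].
  apply IH; intros i Hi; apply Hcr; lia.
Qed.

Section Products.

Variables (p : nat -> Mat) (x tau : nat -> R) (k : nat -> nat).
Hypothesis p_parab : forall n, parab_pm (p n) (x n) (tau n).
Hypothesis tau_pos : forall n, 0 < tau n.
Hypothesis x_incr : forall n, x n < x (S n).
Hypothesis k_incr : strictly_incr k.

Local Notation c := (fun n => x (k n)).
Local Notation r := (fun n => tau (k n)).

Lemma subseq_incr n : x (k n) < x (k (S n)).
Proof. apply incr_seq_lt, strictly_incr_lt; auto. Qed.

Lemma act_sub_prod n z : x (k n) < z ->
  mc (sub_prod p k n) * z + md (sub_prod p k n) <> 0 /\
  act (sub_prod p k n) z = parab_comp c r (S n) z.
Proof.
  revert z; induction n as [|n IH]; intros z Hz;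
    destruct (act_parab_pm _ _ _ z (p_parab _) (tau_pos _) Hz) as [Hden Hact];
    [now split|].
  pose proof (subseq_incr n) as Hkn.
  pose proof (parab_map_gt _ _ z (tau_pos (k (S n))) Hz) as Hgt.
  destruct (IH (act (p (k (S n))) z) ltac:(rewrite Hact; lra)) as [Hden' Hact'].
  destruct (act_mul _ _ z Hden Hden') as [Hden'' Hact''].
  split; [exact Hden''|].
  cbn [sub_prod]; rewrite Hact'', Hact', Hact; reflexivity.
Qed.

Lemma sub_prod_ratio n : mc (sub_prod p k n) <> 0 /\
  ma (sub_prod p k n) / mc (sub_prod p k n) = parab_orbit c r n.
Proof.
  destruct (parab_pm_ratio _ _ _ (p_parab (k n)) (tau_pos _)) as [Hc Hratio].
  destruct n as [|n]; [now split|].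
  assert (Htop : x (k n) < x (k (S n)) + / tau (k (S n))).
  { pose proof (subseq_incr n); pose proof (Rinv_0_lt_compat _ (tau_pos (k (S n)))); lra. }
  destruct (act_sub_prod n _ Htop) as [Hden Hact].
  rewrite <- Hratio in Hden, Hact.
  destruct (ratio_mul _ _ Hc Hden) as [Hc' Hratio'].
  split; [exact Hc'|].
  cbn [sub_prod]; rewrite Hratio', Hact, Hratio; reflexivity.
Qed.

Lemma orbit_inf_conv_iff (L : R) :
  orbit_inf_conv (sub_prod p k) L <-> is_lim_seq (parab_orbit c r) L.
Proof.
  unfold orbit_inf_conv; split.
  - intros [_ HL]; apply (is_lim_seq_ext _ _ _ (fun n => proj2 (sub_prod_ratio n)) HL).
  - intros HL; split; [exists 0%nat; intros n _; apply sub_prod_ratio|].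
    apply (is_lim_seq_ext (parab_orbit c r)); [|exact HL].
    intro n; symmetry; apply sub_prod_ratio.
Qed.

Lemma sub_prod_cvg : exists L, x (k 0) < L /\ orbit_inf_conv (sub_prod p k) L.
Proof.
  destruct (parab_orbit_cvg c r (fun n => tau_pos (k n)) subseq_incr) as [L [HL Hcv]].
  exists L; split; [exact HL | now apply orbit_inf_conv_iff].
Qed.

End Products.

Lemma lex_separated_eq (Lim : (nat -> bool) -> R -> Prop) :
  (forall b b' n L L', (forall i, (i < n)%nat -> b i = b' i) ->
     b n = false -> b' n = true -> Lim b L -> Lim b' L' -> L < L') ->
  forall b b' L, Lim b L -> Lim b' L -> forall n, b n = b' n.
Proof.
  intros Hsep b b' L HL HL' n; induction n as [n IH] using lt_wf_ind.
  destruct (b n) eqn:Hb, (b' n) eqn:Hb'; try reflexivity; exfalso.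
  - assert (L < L) by (apply (Hsep b' b n L L); auto; intros i Hi; symmetry; auto); lra.
  - assert (L < L) by (apply (Hsep b b' n L L); auto); lra.
Qed.

Lemma cantor_diagonal (Lim : (nat -> bool) -> R -> Prop) :
  (forall b, exists L, Lim b L) ->
  (forall b b' L, Lim b L -> Lim b' L -> forall n, b n = b' n) ->
  ~ countable_set (fun L => exists b, Lim b L).
Proof.
  intros Hex Hinj [e He].
  assert (Hpick : forall m, exists b, (exists b', Lim b' (e m)) -> Lim b (e m)).
  { intro m; destruct (classic (exists b', Lim b' (e m))) as [[b' Hb'] | Hno].
    - now exists b'.
    - exists (fun _ => false); intro H; contradiction. }
  destruct (choice _ Hpick) as [B HB].
  set (diag := fun m => negb (B m m)).
  destruct (Hex diag) as [L HL].
  destruct (He L (ex_intro _ diag HL)) as [m Hm]; subst L.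
  pose proof (Hinj _ _ _ (HB m (ex_intro _ diag HL)) HL m) as Hm.
  unfold diag in Hm; destruct (B m m); discriminate.
Qed.

Section Cantor_scheme.

Variables (p : nat -> Mat) (x tau ell bnd : nat -> R) (sel : nat -> nat -> R -> nat).
Hypothesis p_parab : forall n, parab_pm (p n) (x n) (tau n).
Hypothesis tau_pos : forall n, 0 < tau n.
Hypothesis x_incr : forall n, x n < x (S n).
Hypothesis sel_spec : forall n M X,
  (M < sel n M X)%nat /\ X < x (sel n M X) /\ ell (sel n M X) < bnd n.

Local Notation top j := (x j + / tau j).

Fixpoint lo (n : nat) : nat :=
  match n with
  | O => sel O O 0
  | S m => let a := lo m in let b := sel m a (top a) in
           sel (S m) b (parab_threshold (x b) (tau b) (top a))
  end.

Definition hi (n : nat) : nat := sel n (lo n) (top (lo n)).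

Definition cantor_seq (b : nat -> bool) (n : nat) : nat := if b n then hi n else lo n.

Lemma cantor_scheme_spec n :
  (lo n < hi n < lo (S n))%nat /\ top (lo n) < x (hi n) /\
  parab_threshold (x (hi n)) (tau (hi n)) (top (lo n)) < x (lo (S n)) /\
  ell (lo n) < bnd n /\ ell (hi n) < bnd n.
Proof.
  assert (Hlo : ell (lo n) < bnd n) by (destruct n; apply sel_spec).
  destruct (sel_spec n (lo n) (top (lo n))) as [Hhi [Hxhi Hellhi]].
  destruct (sel_spec (S n) (hi n) (parab_threshold (x (hi n)) (tau (hi n)) (top (lo n))))
    as [Hlo' [Hxlo' _]].
  fold (hi n) in *; cbn [lo]; fold (hi n); repeat split; assumption.
Qed.

Lemma cantor_seq_between b n : (lo n <= cantor_seq b n <= hi n)%nat.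
Proof.
  pose proof (cantor_scheme_spec n) as [[Hlohi _] _].
  unfold cantor_seq; destruct (b n); lia.
Qed.

Lemma cantor_seq_incr b : strictly_incr (cantor_seq b).
Proof.
  intro n; pose proof (cantor_scheme_spec n) as [[_ Hhilo] _].
  pose proof (cantor_seq_between b n); pose proof (cantor_seq_between b (S n)); lia.
Qed.

Lemma cantor_seq_ell b n : ell (cantor_seq b n) < bnd n.
Proof.
  pose proof (cantor_scheme_spec n) as [_ [_ [_ [Hlo Hhi]]]].
  unfold cantor_seq; destruct (b n); assumption.
Qed.

Lemma cantor_seq_separation b b' n L L' :
  (forall i, (i < n)%nat -> b i = b' i) -> b n = false -> b' n = true ->
  orbit_inf_conv (sub_prod p (cantor_seq b)) L ->
  orbit_inf_conv (sub_prod p (cantor_seq b')) L' -> L < L'.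
Proof.
  intros Hpre Hb Hb' HL HL'.
  set (k := cantor_seq b) in *; set (k' := cantor_seq b') in *.
  assert (Hk : k n = lo n) by (unfold k, cantor_seq; now rewrite Hb).
  assert (Hk' : k' n = hi n) by (unfold k', cantor_seq; now rewrite Hb').
  pose proof (cantor_scheme_spec n) as [_ [Htop [Hthr _]]].
  pose proof (subseq_incr x k x_incr (cantor_seq_incr b)) as Hc.
  pose proof (subseq_incr x k' x_incr (cantor_seq_incr b')) as Hc'.
  apply (orbit_inf_conv_iff p x tau k p_parab tau_pos x_incr (cantor_seq_incr b)) in HL.
  apply (orbit_inf_conv_iff p x tau k' p_parab tau_pos x_incr (cantor_seq_incr b')) in HL'.
  destruct (parab_orbit_lim_bounds _ _ (fun _ => tau_pos _) Hc L n HL) as [_ HLn].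
  destruct (parab_orbit_lim_bounds _ _ (fun _ => tau_pos _) Hc' L' n HL') as [HLn' _].
  unfold parab_orbit in HLn; rewrite Hk in HLn; rewrite Hk' in HLn'.
  rewrite (parab_comp_ext _ _ (fun i => x (k i)) (fun i => tau (k i))) in HLn'
    by (intros i Hi; unfold k, k', cantor_seq; now rewrite (Hpre i Hi)).
  eapply Rle_lt_trans; [exact HLn|]; eapply Rlt_le_trans; [|exact HLn'].
  apply parab_comp_lt; [intro; apply tau_pos | exact Hc | |].
  - pose proof (incr_seq_le _ Hc (pred n) n ltac:(lia)).
    pose proof (Rinv_0_lt_compat _ (tau_pos (lo n))); cbn beta in *; rewrite Hk in *; lra.
  - apply parab_map_above_threshold; [apply tau_pos | |].
    + pose proof (Rinv_0_lt_compat _ (tau_pos (hi n))); lra.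
    + left; eapply Rlt_le_trans; [exact Hthr|].
      apply incr_seq_le; [exact x_incr | apply cantor_seq_between].
Qed.

End Cantor_scheme.

Lemma far_index_small_value (x ell : nat -> R) (M : nat) (X e : R) :
  is_lim_seq x p_infty -> is_lim_seq ell 0 -> 0 < e ->
  exists j, (M < j)%nat /\ X < x j /\ ell j < e.
Proof.
  intros Hx Hell He.
  apply is_lim_seq_spec in Hx; destruct (Hx X) as [N1 HN1].
  apply is_lim_seq_spec in Hell; destruct (Hell (mkposreal e He)) as [N2 HN2].
  exists (S (M + N1 + N2)); split; [lia|]; split; [apply HN1; lia|].
  specialize (HN2 (S (M + N1 + N2)) ltac:(lia)); cbn in HN2.
  apply Rabs_lt_between in HN2; lra.
Qed.

Lemma limits_uncountable p x tau ell bnd :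
  (forall n, parab_pm (p n) (x n) (tau n)) -> (forall n, 0 < tau n) ->
  (forall n, x n < x (S n)) -> is_lim_seq x p_infty ->
  is_lim_seq ell 0 -> (forall n, 0 < bnd n) ->
  ~ countable_set (fun L => exists k,
      (strictly_incr k /\ forall n, ell (k n) < bnd n) /\ orbit_inf_conv (sub_prod p k) L).
Proof.
  intros Hp Htau Hx Hxlim Hell Hbnd [e He].
  assert (Hsel : forall n M X, exists j, (M < j)%nat /\ X < x j /\ ell j < bnd n)
    by (intros n M X; now apply far_index_small_value).
  set (sel n M X := proj1_sig (constructive_indefinite_description _ (Hsel n M X))).
  assert (Hspec : forall n M X,
            (M < sel n M X)%nat /\ X < x (sel n M X) /\ ell (sel n M X) < bnd n)
    by (intros n M X; exact (proj2_sig (constructive_indefinite_description _ (Hsel n M X)))).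
  apply (cantor_diagonal (fun b => orbit_inf_conv (sub_prod p (cantor_seq x tau sel b)))).
  - intro b; destruct (sub_prod_cvg p x tau (cantor_seq x tau sel b) Hp Htau Hx
                          (cantor_seq_incr x tau ell bnd sel Hspec b)) as [L [_ HL]].
    now exists L.
  - apply lex_separated_eq; intros b b' n L L'.
    apply (cantor_seq_separation p x tau ell bnd sel); assumption.
  - exists e; intros L [b HL]; apply He.
    exists (cantor_seq x tau sel b); split; [split | exact HL].
    + apply (cantor_seq_incr x tau ell bnd sel Hspec).
    + apply (cantor_seq_ell x tau ell bnd sel Hspec).
Qed.

Theorem mainTheorem11
  (Gamma : Mat -> Prop) (p : nat -> Mat) (x D t ell : nat -> R) (eps : R) :
  Fuchsian Gamma -> torsion_free Gamma ->
  (forall n, Gamma (p n)) ->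
  (forall n, parabolic (p n)) ->
  (forall n, fixes_real (p n) (x n)) ->
  (forall n, 0 < x n) ->
  (forall n, x n < x (S n)) ->
  is_lim_seq x p_infty ->
  (forall n, 0 < D n) ->
  (forall n m, n <> m -> forall z, ~ (horoball (x n) (D n) z /\ horoball (x m) (D m) z)) ->
  (forall n, 0 <= t n) ->
  (forall n, t n <= t (S n)) ->
  is_lim_seq t p_infty ->
  (forall n, tangent_at (x n) (D n) (p n) (t n)) ->
  (forall n, horo_length (x n) (D n) (p n) (ell n)) ->
  is_lim_seq ell 0 ->
  0 < eps ->
  let Sigma := fun k : nat -> nat =>
    strictly_incr k /\ forall n, ell (k n) < / 12 * (eps / 4 ^ n) in
  (forall k, Sigma k -> exists L, 0 < L /\ orbit_inf_conv (sub_prod p k) L) /\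
  ~ countable_set (fun L => exists k, Sigma k /\ orbit_inf_conv (sub_prod p k) L).
Proof.
  intros _ _ _ Hpar Hfix Hx0 Hx Hxlim HD _ _ _ _ Htan _ Hell Heps Sigma.
  destruct (choice (fun n tau => 0 < tau /\ parab_pm (p n) (x n) tau)
              (fun n => tangent_parab_pm _ _ _ _ (Hx0 n) (HD n) (Hpar n) (Hfix n) (Htan n)))
    as [tau Htau].
  assert (Hp : forall n, parab_pm (p n) (x n) (tau n)) by apply Htau.
  assert (Htau_pos : forall n, 0 < tau n) by apply Htau.
  split.
  - intros k [Hk _].
    destruct (sub_prod_cvg p x tau k Hp Htau_pos Hx Hk) as [L [HL Hcv]].
    exists L; split; [pose proof (Hx0 (k 0%nat)); lra | exact Hcv].
  - apply (limits_uncountable p x tau); try assumption.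
    intro n; apply Rmult_lt_0_compat; [lra|].
    apply Rdiv_lt_0_compat; [exact Heps | apply pow_lt; lra].
Qed.
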